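(* Let $A$ be a synaptic algebra and let $p,q\in P$ be in generic position ($p\wedge q=p\wedge q^{\perp}=p^{\perp}\wedge q=p^{\perp}\wedge q^{\perp}=0$). Let $c:=(pqp+p^{\perp}q^{\perp}p^{\perp})^{1/2}$, $s:=(pq^{\perp}p+p^{\perp}qp^{\perp})^{1/2}$, let $u$ be the symmetry of the polar decomposition of $p-q^{\perp}$ (so $p-q^{\perp}=cu=uc$) and $v$ the symmetry of the polar decomposition of $p-q$ (so $p-q=sv=vs$), and put $j:=uvp+pvu$ and $\ell:=2p-1$. Then: (i) $j$ is a symmetry in $A$ exchanging $p$ and $p^{\perp}$, i.e. $jpj=p^{\perp}$; (ii) $j$ commutes with both $s$ and $c$; (iii) $j=pj+jp$; (iv) $\ell=2p-1=p-p^{\perp}=cu+sv$ is a symmetry that commutes with $p$, $c$ and $s$.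
   Context: Synaptic algebra (Foulis): $R$ is a real linear associative algebra with unit $1$, and $A\subseteq R$ is a real linear subspace with $1\in A$. For $a,b\in A$ write $aCb$ iff $ab=ba$; $C(a):=\{b\in A: aCb\}$; $CC(a):=\{b\in A: bCd \text{ for all } d\in C(a)\}$. $A$ is a synaptic algebra with enveloping algebra $R$ iff: (SA1) $A$ is a partially ordered archimedean real linear space with positive cone $A^+$, $1$ is an order unit, $\|\cdot\|$ the order-unit norm; (SA2) $a\in A\Rightarrow a^2\in A^+$; (SA3) $a,b\in A^+\Rightarrow aba\in A^+$; (SA4) if $a\in A$, $b\in A^+$, $aba=0$ then $ab=ba=0$; (SA5) if $a\in A^+$ there is $b\in A^+\cap CC(a)$ with $b^2=a$; (SA6) for $a\in A$ there is $p=p^2\in A$ with $ab=0\Leftrightarrow pb=0$ for all $b\in A$; (SA7) if $1\le a$ there is $b\in A$ with $ab=ba=1$; (SA8) if $a,b\in A$, $a_1\le a_2\le\cdots$ are pairwise commuting elements of $C(b)$ with $\|a-a_n\|\to0$, then $a\in C(b)$. $A$ is nondegenerate ($1\neq0$). Products are computed in $R$. $P:=\{p\in A:p=p^2\}$ with inherited order is an orthomodular lattice with $p^{\perp}:=1-p$, meet $\wedge$, join $\vee$. For $0\le a$, $a^{1/2}$ is its unique positive square root in $A$, $|a|:=(a^2)^{1/2}$; $a^{\circ}$ is the carrier of $a$ (the unique projection with $ab=0\Leftrightarrow a^{\circ}b=0$ for all $b\in A$). A symmetry is $u\in A$ with $u^2=1$. For $a\in A$, the signum $t$ of $a$ is the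 partial symmetry with $t^2=a^{\circ}$, $t\in CC(a)$, $a=|a|t=t|a|$; the symmetry of the polar decomposition of $a$ is $t+(a^{\circ})^{\perp}$, a symmetry in $CC(a)$ with $a=|a|u=u|a|$. A symmetry $w$ exchanges projections $x,y$ iff $wxw=y$. *)

From HB Require Import structures.
From mathcomp Require Import all_boot all_order all_algebra.
From mathcomp Require Import reals.
Set Implicit Arguments.
Unset Strict Implicit.
Unset Printing Implicit Defensive.
Import Order.TTheory GRing.Theory Num.Theory.
Local Open Scope ring_scope.

Section Synaptic.
Variables (K : realType) (R : algType K).
(* [A] : the subspace A of the enveloping algebra R; [pos] : the cone A^+. *)
Variables (A pos : R -> Prop).

Definition sle (a b : R) : Prop := pos (b - a).

Definition commutes (a b : R) : Prop := a * b = b * a.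

Definition inC (a b : R) : Prop := A b /\ commutes a b.

Definition inCC (a b : R) : Prop :=
  A b /\ forall d, inC a d -> commutes b d.

(* order-unit norm: ||x|| <= r  iff  -r.1 <= x <= r.1 (||x|| is the infimum of such r >= 0) *)
Definition ounorm_le (x : R) (r : K) : Prop :=
  sle (- (r *: 1)) x /\ sle x (r *: 1).

Definition ounorm_cvg (an : nat -> R) (a : R) : Prop :=
  forall eps : K, 0 < eps -> exists N : nat, forall n, (N <= n)%N ->
    ounorm_le (a - an n) eps.

Record synaptic_algebra : Prop := SynapticAlgebra {
  sa_sub0 : A 0;
  sa_subD : forall a b, A a -> A b -> A (a + b);
  sa_subZ : forall (k : K) a, A a -> A (k *: a);
  sa_sub1 : A 1;
  sa_pos_sub : forall a, pos a -> A a;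
  sa_pos0 : pos 0;
  sa_posD : forall a b, pos a -> pos b -> pos (a + b);
  sa_posZ : forall (k : K) a, 0 <= k -> pos a -> pos (k *: a);
  sa_pos_antisym : forall a, pos a -> pos (- a) -> a = 0;
  sa_archimedean : forall a b, A a -> A b ->
    (forall n : nat, sle (a *+ n) b) -> sle a 0;
  sa_order_unit : forall a, A a -> exists n : nat, sle a (1 *+ n);
  sa_sq_pos : forall a, A a -> pos (a * a);
  sa_aba_pos : forall a b, pos a -> pos b -> pos (a * b * a);
  sa_aba0 : forall a b, A a -> pos b -> a * b * a = 0 -> a * b = 0 /\ b * a = 0;
  sa_sqrt : forall a, pos a -> exists b, pos b /\ inCC a b /\ b * b = a;
  sa_carrier : forall a, A a -> exists p, A p /\ p * p = p /\
    (forall b, A b -> (a * b = 0 <-> p * b = 0));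
  sa_inv : forall a, sle 1 a -> exists b, A b /\ a * b = 1 /\ b * a = 1;
  sa_cvg_comm : forall (a b : R) (an : nat -> R), A a -> A b ->
    (forall n, inC b (an n)) ->
    (forall n, sle (an n) (an n.+1)) ->
    (forall m n, commutes (an m) (an n)) ->
    ounorm_cvg an a -> inC b a;
  sa_nondeg : (1 : R) != 0
}.

Definition proj (p : R) : Prop := A p /\ p * p = p.

Definition is_meetP (p q m : R) : Prop :=
  proj m /\ sle m p /\ sle m q /\
  forall r, proj r -> sle r p -> sle r q -> sle r m.

Definition generic_position (p q : R) : Prop :=
  is_meetP p q 0 /\ is_meetP p (1 - q) 0 /\
  is_meetP (1 - p) q 0 /\ is_meetP (1 - p) (1 - q) 0.

Definition is_sqrt (a x : R) : Prop := pos x /\ x * x = a.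

Definition is_abs (a x : R) : Prop := is_sqrt (a * a) x.

Definition is_carrier (a o : R) : Prop :=
  proj o /\ forall b, A b -> (a * b = 0 <-> o * b = 0).

Definition is_signum (a t : R) : Prop :=
  A t /\ inCC a t /\
  (exists o, is_carrier a o /\ t * t = o) /\
  (exists x, is_abs a x /\ a = x * t /\ a = t * x).

Definition is_polar_symmetry (a u : R) : Prop :=
  exists t o, is_signum a t /\ is_carrier a o /\ u = t + (1 - o).

Definition symmetry (u : R) : Prop := A u /\ u * u = 1.

End Synaptic.

From Stdlib Require Ncring Ncring_tac.
From HB Require Import structures.
From mathcomp Require Import all_boot all_order all_algebra.
From mathcomp Require Import reals.
Import Order.TTheory GRing.Theory Num.Theory.
Local Open Scope ring_scope.
Set Implicit Arguments.
Unset Strict Implicit.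

(* Put a := p - q^perp and b := p - q.  Then a^2 = c^2, b^2 = s^2, a^2 + b^2 = 1
   and ab = -ba, so c and s commute with p, q and with each other, and the polar
   decompositions read a = cu = uc, b = sv = vs.  Generic position makes c and s
   injective: the complement of the carrier of c (or s) is a projection commuting
   with p and q that lies under two of the four vanishing meets.  Hence
   cs(uv + vu) = ab + ba = 0 forces uv = -vu.  Then w := uv satisfies w^2 = -1
   and anticommutes with the reflection l := 2p - 1 = a + b, so j = wl is a
   symmetry anticommuting with l; as p = (1 + l)/2 this gives jpj = 1 - p and
   pj + jp = j. *)

(* Stdlib's non-commutative [ring] for MathComp rings; algebra-tactics' [ring]
   needs commutativity. *)
#[global] Instance pzRing_ops (R : pzRingType) :
  @Ncring.Ring_ops R 0 1 +%R *%R (fun x y => x - y) -%R eq := {}.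

#[global] Instance pzRing_ring (R : pzRingType) : Ncring.Ring (Ro := pzRing_ops R).
Proof.
constructor.
- by constructor; [move=> ? | move=> ? ? -> | move=> ? ? ? -> ->].
- by move=> ? ? -> ? ? ->.
- by move=> ? ? -> ? ? ->.
- by move=> ? ? -> ? ? ->.
- by move=> ? ? ->.
- exact: add0r.
- exact: addrC.
- exact: addrA.
- exact: mul1r.
- exact: mulr1.
- exact: mulrA.
- exact: mulrDl.
- move=> x y z; exact: mulrDr.
- by [].
- exact: subrr.
Qed.

Ltac ncring := Ncring_tac.non_commutative_ring.

Section Idempotents.
Variables (R : pzRingType) (e f : R).
Hypotheses (ee : e * e = e) (ff : f * f = f).

Let mulr_ee z : z * e * e = z * e. Proof. by rewrite -mulrA ee. Qed.
Let mulr_ff z : z * f * f = z * f. Proof. by rewrite -mulrA ff. Qed.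

Local Ltac idempotent_ring :=
  rewrite ?mulr2n; repeat progress rewrite ?mulrDr ?mulrDl ?mulrBr ?mulrBl ?mulNr ?mulrN
    ?opprK ?mulr1 ?mul1r ?mulrA;
  rewrite ?ee ?ff ?mulr_ee ?mulr_ff; ncring.

Lemma idempotent_sandwich_add :
  e * (1 - f) * e + (1 - e) * f * (1 - e) = (e - f) * (e - f).
Proof. idempotent_ring. Qed.

Lemma commr_idempotent_sqr_subl : GRing.comm e ((e - f) * (e - f)).
Proof. rewrite /GRing.comm; idempotent_ring. Qed.

Lemma commr_idempotent_sqr_subr : GRing.comm f ((e - f) * (e - f)).
Proof. rewrite /GRing.comm; idempotent_ring. Qed.

Lemma idempotent_sqr_sub_add :
  (e - (1 - f)) * (e - (1 - f)) + (e - f) * (e - f) = 1.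
Proof. idempotent_ring. Qed.

Lemma idempotent_sub_anticomm :
  (e - (1 - f)) * (e - f) = - ((e - f) * (e - (1 - f))).
Proof. idempotent_ring. Qed.

Lemma idempotent_reflection_sqr : (e *+ 2 - 1) * (e *+ 2 - 1) = 1.
Proof. idempotent_ring. Qed.

Lemma commr_reflection : GRing.comm (e *+ 2 - 1) e.
Proof. rewrite /GRing.comm; idempotent_ring. Qed.

End Idempotents.

Section Anticommutation.
Variable R : pzRingType.
Implicit Types x y z : R.

Definition anticomm x y := x * y = - (y * x).

Lemma anticomm_sym x y : anticomm x y -> anticomm y x.
Proof. by rewrite /anticomm => ->; rewrite opprK. Qed.

Lemma anticommrD x y z : anticomm x y -> anticomm x z -> anticomm x (y + z).
Proof. by rewrite /anticomm mulrDr mulrDl opprD => -> ->. Qed.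

Lemma anticommr_commM x y z : GRing.comm x y -> anticomm x z -> anticomm x (y * z).
Proof. by rewrite /anticomm mulrA => -> xz; rewrite -mulrA xz mulrN mulrA. Qed.

Lemma anticomm_mull x y : anticomm x y -> anticomm (x * y) x.
Proof. by move/anticomm_sym; rewrite /anticomm => yx; rewrite -mulrA yx mulrN. Qed.

Lemma anticomm_mulr x y : anticomm x y -> anticomm (x * y) y.
Proof.
by move/anticomm_sym; rewrite /anticomm => yx; rewrite mulrA yx mulNr opprK.
Qed.

Lemma sqr_mul_anticomm x y : anticomm x y -> x * y * (x * y) = - (x * x * (y * y)).
Proof.
by move=> xy; rewrite -mulrA (mulrA y) (anticomm_sym xy) mulNr mulrN !mulrA.
Qed.

End Anticommutation.

Section Reflection.
Variables (K : numFieldType) (R : lalgType K).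

Lemma mulrn2I (x y : R) : x *+ 2 = y *+ 2 -> x = y.
Proof.
move/(congr1 (fun z => (2%:R : K)^-1 *: z)).
by rewrite -!scaler_nat !scalerA mulVf ?pnatr_eq0 // !scale1r.
Qed.

Variables (p l : R).
Hypothesis p2 : p *+ 2 = 1 + l.

Lemma anticomm_reflection_exchange j : j * j = 1 -> anticomm j l -> j * p * j = 1 - p.
Proof.
move=> jj jl; apply: mulrn2I.
rewrite -mulrnAl -mulrnAr mulrnBl p2 mulrDr mulrDl mulr1 jj jl mulNr -mulrA jj mulr1.
by rewrite mulr2n addrKA.
Qed.

Lemma anticomm_reflection_split j : anticomm j l -> j = p * j + j * p.
Proof.
move=> jl; apply: mulrn2I.
rewrite mulrnDl -mulrnAl -mulrnAr p2 mulrDl mulrDr mul1r mulr1 jl.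
by rewrite addrACA subrr addr0 mulr2n.
Qed.

Lemma anticomm_reflection_sum u v :
  anticomm u v -> anticomm (u * v) l -> u * v * p + p * v * u = u * v * l.
Proof.
move=> uv uvl; apply: mulrn2I.
rewrite mulrnDl -mulrnAr -2!mulrnAl p2 mulrDl mulrDr mul1r mulr1 mulrDl -(mulrA l).
by rewrite (anticomm_sym uv) mulrN -uvl addrACA subrr add0r mulr2n.
Qed.

End Reflection.

Section SynapticAlgebra.
Variables (K : realType) (R : algType K) (A pos : R -> Prop).
Hypothesis HA : synaptic_algebra A pos.

Lemma A_pos a : pos a -> A a. Proof. exact: (sa_pos_sub HA). Qed.

Lemma A_B a b : A a -> A b -> A (a - b).
Proof. by move=> Aa /(sa_subZ HA (-1)); rewrite scaleN1r; exact: (sa_subD HA Aa). Qed.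

Lemma A_sqr a : A a -> A (a * a).
Proof. by move=> Aa; apply/A_pos/(sa_sq_pos HA). Qed.

Lemma A_jordan a b : A a -> A b -> A (a * b + b * a).
Proof.
move=> Aa Ab.
have -> : a * b + b * a = (a + b) * (a + b) - a * a - b * b by ncring.
by do 2?apply: A_B; apply: A_sqr => //; apply: (sa_subD HA).
Qed.

Lemma A_half a : A (a *+ 2) -> A a.
Proof.
move/(sa_subZ HA (2%:R)^-1).
by rewrite -scaler_nat scalerA mulVf ?pnatr_eq0 // scale1r.
Qed.

Lemma A_mul_comm a b : A a -> A b -> commutes a b -> A (a * b).
Proof. by move=> Aa Ab ab; apply: A_half; rewrite mulr2n {2}ab; apply: A_jordan. Qed.

Lemma A_sandwich a b : A a -> A b -> A (a * b * a).
Proof.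
move=> Aa Ab; apply: A_half.
have -> : (a * b * a) *+ 2 =
  a * (a * b + b * a) + (a * b + b * a) * a - (a * a * b + b * (a * a)).
  by rewrite mulr2n; ncring.
by apply: A_B; apply: A_jordan => //; [apply: A_jordan | apply: A_sqr].
Qed.

Lemma pos1 : pos 1.
Proof. by rewrite -(mulr1 1); apply/(sa_sq_pos HA)/(sa_sub1 HA). Qed.

Lemma proj_pos e : proj A e -> pos e.
Proof. by case=> Ae ee; rewrite -ee; apply: (sa_sq_pos HA). Qed.

Lemma proj_compl e : proj A e -> proj A (1 - e).
Proof.
case=> Ae ee; split; first exact: A_B (sa_sub1 HA) Ae.
by rewrite mulrBr mulr1 mulrBl mul1r ee subrr subr0.
Qed.

Lemma proj_reflection_symmetry e : proj A e -> symmetry A (e *+ 2 - 1).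
Proof.
case=> Ae ee; split; last exact: idempotent_reflection_sqr.
by apply: A_B (sa_sub1 HA); rewrite mulr2n; apply: (sa_subD HA).
Qed.

Lemma sqr_eq0 a : A a -> a * a = 0 -> a = 0.
Proof. by move=> Aa aa; have [] := sa_aba0 HA Aa pos1; rewrite mulr1. Qed.

Lemma pos_addr_eq0 a b : pos a -> pos b -> a + b = 0 -> a = 0.
Proof.
move=> Pa Pb /eqP; rewrite addr_eq0 => /eqP ab.
by apply: (sa_pos_antisym HA) => //; rewrite ab opprK.
Qed.

Lemma pos_sandwich_comm x y : pos x -> A y -> commutes x y -> pos (y * x * y).
Proof.
move=> Px Ay xy.
have [r [Pr [[_ rCC] rr]]] := sa_sqrt HA Px.
have ry : commutes r y by apply: rCC.
have -> : y * x * y = r * (y * y) * r.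
  have -> : y * x * y = (y * r) * (r * y) by rewrite -rr !mulrA.
  have -> : r * (y * y) * r = (r * y) * (y * r) by rewrite !mulrA.
  by rewrite ry.
by apply: (sa_aba_pos HA) => //; apply: (sa_sq_pos HA).
Qed.

Lemma pos_commr_sqr_inj x b : pos x -> pos b -> commutes x b -> x * x = b * b -> x = b.
Proof.
move=> Px Pb xb xxbb; have [Ax Ab] := (A_pos Px, A_pos Pb).
have Ay : A (x - b) := A_B Ax Ab.
have xy : commutes x (x - b) by apply: commrB.
have yb : commutes b (x - b) by apply: commrB => //; apply: commr_sym.
have y_xb : (x - b) * (x + b) = 0.
  by rewrite mulrBl !mulrDr xxbb xb (addrC (b * x)) subrr.
have sum0 : (x - b) * x * (x - b) + (x - b) * b * (x - b) = 0.
  rewrite -mulrDl -mulrDr -mulrA -(commrD (commr_sym xy) (commr_sym yb)).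
  by rewrite y_xb mulr0.
have yxy := pos_addr_eq0 (pos_sandwich_comm Px Ay xy) (pos_sandwich_comm Pb Ay yb) sum0.
move: sum0; rewrite yxy add0r => yby.
have [[yx _] [ybb _]] := (sa_aba0 HA Ay Px yxy, sa_aba0 HA Ay Pb yby).
apply/eqP; rewrite -subr_eq0; apply/eqP; apply: sqr_eq0 Ay _.
by rewrite mulrBr yx ybb subrr.
Qed.

Lemma pos_sqrt_commr x d : pos x -> A d -> commutes (x * x) d -> commutes x d.
Proof.
move=> Px Ad xxd.
have [b [Pb [[_ bCC] bb]]] := sa_sqrt HA (sa_sq_pos HA (A_pos Px)).
suff -> : x = b by apply: bCC.
apply: (pos_commr_sqr_inj Px Pb _ (esym bb)); apply: commr_sym; apply: bCC.
by split; [exact: A_pos Px | rewrite /commutes mulrA].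
Qed.

Lemma pos_sqr_inj x y : pos x -> pos y -> x * x = y * y -> x = y.
Proof.
move=> Px Py xxyy; apply: (pos_commr_sqr_inj Px Py _ xxyy).
by apply: pos_sqrt_commr Px (A_pos Py) _; rewrite /commutes xxyy mulrA.
Qed.

Lemma commr_proj_sqr_eq0 y e :
  A y -> proj A e -> commutes y e -> e * (y * y) = 0 -> y * e = 0 /\ e * y = 0.
Proof.
move=> Ay Pe ye eyy; apply: (sa_aba0 HA Ay (proj_pos Pe)).
by rewrite ye -mulrA.
Qed.

Lemma carrier_compl a o : A a -> is_carrier A a o ->
  [/\ a * (1 - o) = 0, (1 - o) * a = 0 & proj A (1 - o)].
Proof.
move=> Aa [Po ao]; have Pe := proj_compl Po; have [_ oo] := Po.
have ae : a * (1 - o) = 0 by apply/(ao _ Pe.1); rewrite mulrBr mulr1 oo subrr.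
split=> //; have [|_ //] := sa_aba0 HA Aa (proj_pos Pe).
by rewrite ae mul0r.
Qed.

Lemma carrier_uniq a o o' : A a -> is_carrier A a o -> is_carrier A a o' -> o = o'.
Proof.
move=> Aa Co Co'; have [[[Ao oo] co] [[Ao' oo'] co']] := (Co, Co').
have [ae _ Pe] := carrier_compl Aa Co; have [ae' _ Pe'] := carrier_compl Aa Co'.
have o'e : o' * (1 - o) = 0 by apply/(co' _ Pe.1).
have oe' : o * (1 - o') = 0 by apply/(co _ Pe'.1).
apply/eqP; rewrite -subr_eq0; apply/eqP; apply: sqr_eq0 (A_B Ao Ao') _.
have -> : (o - o') * (o - o') =
  (o * o - o) + (o' * o' - o') + o * (1 - o') + o' * (1 - o) by ncring.
by rewrite oo oo' o'e oe' !subrr !addr0.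
Qed.

Lemma carrier_compl_comm a o b : A a -> is_carrier A a o -> A b -> commutes a b ->
  commutes (1 - o) b.
Proof.
move=> Aa Co Ab ab; have [ae ea [Ae ee]] := carrier_compl Aa Co.
have [_ co] := Co; have o_eq : o = 1 - (1 - o) by rewrite subKr.
set e := 1 - o in o_eq ae ea Ae ee *; clearbody e.
(* [be + eb] is killed by [a], hence by [o], so [be = ebe]; then [eb - ebe]
   squares to zero. *)
have o_jordan : o * (b * e + e * b) = 0.
  apply/(co _ (A_jordan Ab Ae)).
  by rewrite mulrDr !mulrA ab -(mulrA b) ae mulr0 mul0r addr0.
have be : b * e = e * b * e.
  have : (1 - e) * (b * e + e * b) = b * e - e * b * e.
    by rewrite mulrBl mul1r mulrDr !mulrA ee; ncring.
  by rewrite -o_eq o_jordan => /esym/eqP; rewrite subr_eq0 => /eqP.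
have Ag : A (e * b - e * b * e).
  have -> : e * b - e * b * e = e * b + b * e - e * b * e *+ 2.
    by rewrite be mulr2n; ncring.
  apply: A_B; first exact: A_jordan.
  by rewrite mulr2n; apply: (sa_subD HA); apply: A_sandwich.
have g0 : e * b - e * b * e = 0.
  apply: sqr_eq0 Ag _.
  have -> : (e * b - e * b * e) * (e * b - e * b * e) =
    (e * b * e * b - e * b * (e * e) * b) + (e * b * (e * e) * b * e - e * b * e * b * e).
    by ncring.
  by rewrite ee !subrr addr0.
have eb : e * b = e * b * e by apply/eqP; rewrite -subr_eq0 g0.
by rewrite /commutes eb -be.
Qed.

Lemma polar_symmetryP a x u : A a -> pos x -> x * x = a * a ->
  is_polar_symmetry A pos a u -> [/\ A u, u * u = 1, a = x * u & a = u * x].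
Proof.
move=> Aa Px xx [t [o [[At [[_ tCC] [[o' [Co' tt]] [x' [[Px' xx'] [axt atx]]]]]] [Co ->]]]].
rewrite (carrier_uniq Aa Co' Co) in tt.
have x'x : x' = x by apply: pos_sqr_inj; rewrite // xx' xx.
rewrite x'x in axt atx.
have [ae ea [Ae ee]] := carrier_compl Aa Co; have [[_ oo] _] := Co.
have te : commutes t (1 - o) by apply: tCC; split; rewrite // /commutes ae ea.
have [t_e e_t] : t * (1 - o) = 0 /\ (1 - o) * t = 0.
  by apply: commr_proj_sqr_eq0 => //; rewrite tt mulrBl mul1r oo subrr.
have xe : commutes x (1 - o).
  by apply: pos_sqrt_commr => //; rewrite /commutes xx -mulrA ae mulr0 mulrA ea mul0r.
have [x_e e_x] : x * (1 - o) = 0 /\ (1 - o) * x = 0.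
  by apply: commr_proj_sqr_eq0 (A_pos Px) _ xe _; rewrite // xx mulrA ea mul0r.
split.
- exact: (sa_subD HA At Ae).
- by rewrite mulrDr !(mulrDl t (1 - o)) tt t_e e_t ee add0r addr0 addrC subrK.
- by rewrite mulrDr x_e addr0.
- by rewrite mulrDl e_x addr0.
Qed.

Lemma proj_sub_mul_pos x e : proj A x -> proj A e -> commutes e x -> pos (x - x * e).
Proof.
move=> [Ax xx] Pe ex.
have -> : x - x * e = x * (1 - e) * x.
  by rewrite mulrBr mulr1 mulrBl -mulrA ex mulrA xx.
by apply: (sa_aba_pos HA); apply: proj_pos => //; apply: proj_compl.
Qed.

Lemma meet0_proj_mul x y e : is_meetP A pos x y 0 -> proj A x -> proj A y -> proj A e ->
  commutes e x -> commutes e y -> x * e = y * e -> x * e = 0.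
Proof.
move=> [_ [_ [_ meet]]] [Ax xx] Py [Ae ee] ex ey xe_ye.
have Pxe : proj A (x * e).
  split; first exact: A_mul_comm (commr_sym ex).
  by rewrite -mulrA (mulrA e) ex -mulrA ee mulrA xx.
have xe_x : sle pos (x * e) x by apply: proj_sub_mul_pos.
have xe_y : sle pos (x * e) y by rewrite /sle xe_ye; apply: proj_sub_mul_pos.
apply: (sa_pos_antisym HA (proj_pos Pxe)).
by have := meet _ Pxe xe_x xe_y; rewrite /sle sub0r.
Qed.

Lemma pos_injective z : pos z ->
  (forall e, proj A e -> inCC A z e -> z * e = 0 -> e = 0) ->
  forall b, A b -> z * b = 0 -> b = 0.
Proof.
move=> Pz zinj b Ab zb; have Az := A_pos Pz.
have [o [Ao [oo co]]] := sa_carrier HA Az.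
have Co : is_carrier A z o by split.
have [ze _ Pe] := carrier_compl Az Co.
have e0 : 1 - o = 0.
  apply: (zinj _ Pe _ ze); split; first exact: Pe.1.
  by move=> d [Ad zd]; apply: carrier_compl_comm Az Co Ad zd.
have o1 : o = 1 by apply/eqP; rewrite eq_sym -subr_eq0 e0.
by have := proj1 (co b Ab) zb; rewrite o1 mul1r.
Qed.

Lemma sqr_sub_proj_injective p f x : proj A p -> proj A f ->
  is_meetP A pos p f 0 -> is_meetP A pos (1 - p) (1 - f) 0 ->
  pos x -> x * x = (p - f) * (p - f) -> forall b, A b -> x * b = 0 -> b = 0.
Proof.
move=> Pp Pf mpf mpf' Px xx; apply: (pos_injective Px) => e Pe [_ eCC] xe.
have [[Ap pp] [Af ff]] := (Pp, Pf).
have xp : commutes x p.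
  by apply: pos_sqrt_commr => //; rewrite xx; apply/commr_sym/commr_idempotent_sqr_subl.
have xf : commutes x f.
  by apply: pos_sqrt_commr => //; rewrite xx; apply/commr_sym/commr_idempotent_sqr_subr.
have [ep ef ex] : [/\ commutes e p, commutes e f & commutes e x].
  by split; apply: eCC; split; rewrite //; apply: A_pos.
have [ae _] : (p - f) * e = 0 /\ e * (p - f) = 0.
  apply: commr_proj_sqr_eq0 (A_B Ap Af) Pe (commr_sym (commrB ep ef)) _.
  by rewrite -xx mulrA ex xe mul0r.
have pe : p * e = f * e by apply/eqP; rewrite -subr_eq0 -mulrBl ae.
have pe0 := meet0_proj_mul mpf Pp Pf Pe ep ef pe.
have p'e : (1 - p) * e = (1 - f) * e by rewrite !mulrBl pe.
have p'e0 := meet0_proj_mul mpf' (proj_compl Pp) (proj_compl Pf) Pe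
  (commrB (commr1 e) ep) (commrB (commr1 e) ef) p'e.
by rewrite -[e]mul1r -(subrKC p 1) mulrDl pe0 p'e0 addr0.
Qed.

Section GenericPosition.
Variables p q c s u v : R.
Hypotheses (Hp : proj A p) (Hq : proj A q) (Hgen : generic_position A pos p q).
Hypotheses (Hc : is_sqrt pos (p * q * p + (1 - p) * (1 - q) * (1 - p)) c)
  (Hs : is_sqrt pos (p * (1 - q) * p + (1 - p) * q * (1 - p)) s).
Hypotheses (Hu : is_polar_symmetry A pos (p - (1 - q)) u)
  (Hv : is_polar_symmetry A pos (p - q) v).

Local Notation l := (p *+ 2 - 1).

Lemma sqr_c : c * c = (p - (1 - q)) * (p - (1 - q)).
Proof.
case: Hc => _ ->.
by rewrite -(idempotent_sandwich_add Hp.2 (proj_compl Hq).2) subKr.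
Qed.

Lemma sqr_s : s * s = (p - q) * (p - q).
Proof. by case: Hs => _ ->; rewrite (idempotent_sandwich_add Hp.2 Hq.2). Qed.

Lemma sqr_c_add_sqr_s : c * c + s * s = 1.
Proof. by rewrite sqr_c sqr_s (idempotent_sqr_sub_add Hp.2 Hq.2). Qed.

Lemma c_injective b : A b -> c * b = 0 -> b = 0.
Proof.
have [_ [mpq' [mp'q _]]] := Hgen.
apply: (sqr_sub_proj_injective Hp (proj_compl Hq) mpq' _ Hc.1 sqr_c).
by rewrite subKr.
Qed.

Lemma s_injective b : A b -> s * b = 0 -> b = 0.
Proof.
have [mpq [_ [_ mp'q']]] := Hgen.
exact: (sqr_sub_proj_injective Hp Hq mpq mp'q' Hs.1 sqr_s).
Qed.

Lemma polar_u : [/\ A u, u * u = 1, p - (1 - q) = c * u & p - (1 - q) = u * c].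
Proof.
apply: (polar_symmetryP _ Hc.1 sqr_c Hu).
exact: (A_B Hp.1 (A_B (sa_sub1 HA) Hq.1)).
Qed.

Lemma polar_v : [/\ A v, v * v = 1, p - q = s * v & p - q = v * s].
Proof. exact: (polar_symmetryP (A_B Hp.1 Hq.1) Hs.1 sqr_s Hv). Qed.

Lemma commr_cu : commutes c u.
Proof. by rewrite /commutes; have [_ _ <- <-] := polar_u. Qed.

Lemma commr_sv : commutes s v.
Proof. by rewrite /commutes; have [_ _ <- <-] := polar_v. Qed.

Lemma commr_s_from_c d : A d -> commutes c d -> commutes s d.
Proof.
move=> Ad cd; apply: (pos_sqrt_commr Hs.1 Ad).
rewrite -(addKr (c * c) (s * s)) sqr_c_add_sqr_s; apply: commr_sym.
by apply: commrD (commr1 d); apply: commrN; apply: commrM; apply: commr_sym.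
Qed.

Lemma commr_c_from_s d : A d -> commutes s d -> commutes c d.
Proof.
move=> Ad sd; apply: (pos_sqrt_commr Hc.1 Ad).
rewrite -(addrK (s * s) (c * c)) sqr_c_add_sqr_s; apply: commr_sym.
by apply: commrB (commr1 d) _; apply: commrM; apply: commr_sym.
Qed.

Lemma commr_cs : commutes c s.
Proof. exact: commr_c_from_s (A_pos Hs.1) (commr_refl s). Qed.

Lemma commr_su : commutes s u.
Proof. by have [Au _ _ _] := polar_u; apply: commr_s_from_c Au commr_cu. Qed.

Lemma commr_cv : commutes c v.
Proof. by have [Av _ _ _] := polar_v; apply: commr_c_from_s Av commr_sv. Qed.

Lemma anticomm_uv : anticomm u v.
Proof.
have [Au uu a_cu _] := polar_u; have [Av vv b_sv _] := polar_v.
have [As Ac] := (A_pos Hs.1, A_pos Hc.1).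
have sw : commutes s (u * v + v * u).
  by apply: commrD; apply: commrM;
    [apply: commr_su | apply: commr_sv | apply: commr_sv | apply: commr_su].
have csw : c * (s * (u * v + v * u)) = 0.
  have -> : c * (s * (u * v + v * u)) = c * u * (s * v) + s * v * (c * u).
    rewrite !mulrDr; congr (_ + _); first by rewrite (mulrA s) commr_su !mulrA.
    by rewrite mulrA commr_cs -mulrA (mulrA c) commr_cv !mulrA.
  by rewrite -a_cu -b_sv (idempotent_sub_anticomm Hp.2 Hq.2) addNr.
have Aw := A_jordan Au Av.
have w0 := s_injective Aw (c_injective (A_mul_comm As Aw sw) csw).
by apply/eqP; rewrite -addr_eq0 w0.
Qed.

Lemma reflection_eq : l = c * u + s * v.
Proof.
have [_ _ <- _] := polar_u; have [_ _ <- _] := polar_v.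
by rewrite mulr2n; ncring.
Qed.

Lemma anticomm_uv_reflection : anticomm (u * v) l.
Proof.
rewrite reflection_eq; apply: anticommrD; apply: anticommr_commM.
- exact: commr_sym (commrM commr_cu commr_cv).
- exact: anticomm_mull anticomm_uv.
- exact: commr_sym (commrM commr_su commr_sv).
- exact: anticomm_mulr anticomm_uv.
Qed.

Local Notation j := (u * v * p + p * v * u).

Lemma exchange_eq : j = u * v * l.
Proof.
exact: (anticomm_reflection_sum (esym (subrKC 1 (p *+ 2)))
  anticomm_uv anticomm_uv_reflection).
Qed.

Lemma exchange_eq_cs : j = s * u - c * v.
Proof.
have [_ uu _ _] := polar_u; have [_ vv _ _] := polar_v.
have uvc : u * v * c = c * (u * v) by apply: commr_sym; apply: commrM commr_cu commr_cv.
have uvs : u * v * s = s * (u * v) by apply: commr_sym; apply: commrM commr_su commr_sv.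
have uvu : u * v * u = - v by rewrite (anticomm_mull anticomm_uv) mulrA uu mul1r.
have uvv : u * v * v = u by rewrite -mulrA vv mulr1.
rewrite exchange_eq reflection_eq mulrDr !mulrA uvc uvs -(mulrA c) -(mulrA s).
by rewrite uvu uvv mulrN addrC.
Qed.

Lemma symmetry_exchange : symmetry A j.
Proof.
have [Au uu _ _] := polar_u; have [Av vv _ _] := polar_v.
have [Ac As] := (A_pos Hc.1, A_pos Hs.1).
split.
  rewrite exchange_eq_cs.
  exact: (A_B (A_mul_comm As Au commr_su) (A_mul_comm Ac Av commr_cv)).
rewrite exchange_eq (sqr_mul_anticomm anticomm_uv_reflection) (sqr_mul_anticomm anticomm_uv).
by rewrite uu vv (idempotent_reflection_sqr Hp.2) !mulr1 opprK.
Qed.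

Lemma anticomm_exchange_reflection : anticomm j l.
Proof. by rewrite exchange_eq; apply: anticomm_mulr anticomm_uv_reflection. Qed.

Lemma commr_exchange_s : commutes j s.
Proof.
rewrite exchange_eq_cs; apply: commr_sym; apply: commrB; apply: commrM.
- exact: commr_refl.
- exact: commr_su.
- exact: commr_sym commr_cs.
- exact: commr_sv.
Qed.

Lemma commr_exchange_c : commutes j c.
Proof.
rewrite exchange_eq_cs; apply: commr_sym; apply: commrB; apply: commrM.
- exact: commr_cs.
- exact: commr_cu.
- exact: commr_refl.
- exact: commr_cv.
Qed.

Lemma commr_reflection_c : commutes l c.
Proof.
rewrite reflection_eq; apply: commr_sym; apply: commrD; apply: commrM.
- exact: commr_refl.
- exact: commr_cu.
- exact: commr_cs.
- exact: commr_cv.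
Qed.

Lemma commr_reflection_s : commutes l s.
Proof.
rewrite reflection_eq; apply: commr_sym; apply: commrD; apply: commrM.
- exact: commr_sym commr_cs.
- exact: commr_su.
- exact: commr_refl.
- exact: commr_sv.
Qed.

End GenericPosition.

End SynapticAlgebra.

Theorem theorem7p5 (K : realType) (R : algType K) (A pos : R -> Prop)
  (HA : synaptic_algebra A pos)
  (p q : R) (Hp : proj A p) (Hq : proj A q)
  (Hgen : generic_position A pos p q)
  (c s u v : R)
  (Hc : is_sqrt pos (p * q * p + (1 - p) * (1 - q) * (1 - p)) c)
  (Hs : is_sqrt pos (p * (1 - q) * p + (1 - p) * q * (1 - p)) s)
  (Hu : is_polar_symmetry A pos (p - (1 - q)) u)
  (Hv : is_polar_symmetry A pos (p - q) v) :
  let j := u * v * p + p * v * u in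
  let l := p *+ 2 - 1 in
  (* (i) *)
  (symmetry A j /\ j * p * j = 1 - p) /\
  (* (ii) *)
  (commutes j s /\ commutes j c) /\
  (* (iii) *)
  j = p * j + j * p /\
  (* (iv) *)
  (l = p - (1 - p) /\ l = c * u + s * v /\ symmetry A l /\
   commutes l p /\ commutes l c /\ commutes l s).
Proof.
move=> j l.
have p2 : p *+ 2 = 1 + l := esym (subrKC 1 _).
have jl : anticomm j l := anticomm_exchange_reflection HA Hp Hq Hgen Hc Hs Hu Hv.
have [Aj jj] := symmetry_exchange HA Hp Hq Hgen Hc Hs Hu Hv.
split; first by split; [split | exact: (anticomm_reflection_exchange p2 jj jl)].
split; first by split;
  [exact: (commr_exchange_s HA Hp Hq Hgen Hc Hs Hu Hv) |
   exact: (commr_exchange_c HA Hp Hq Hgen Hc Hs Hu Hv)].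
split; first exact: (anticomm_reflection_split p2 jl).
split; first by rewrite /l mulr2n opprB addrA.
split; first exact: (reflection_eq HA Hp Hq Hc Hs Hu Hv).
split; first exact: (proj_reflection_symmetry HA Hp).
split; first exact: (commr_reflection Hp.2).
by split;
  [exact: (commr_reflection_c HA Hp Hq Hc Hs Hu Hv) |
   exact: (commr_reflection_s HA Hp Hq Hc Hs Hu Hv)].
Qed.
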